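(* Let $A,B\in\mathbb{T}^{k\times n}$ be such that $A\odot B^T$ is symmetric. Then any two rows of the $k\times 2n$ matrix $(A|B)$ are (tropically) orthogonal.
   Context: $\mathbb{T}=\mathbb{R}\cup\{\infty\}$ with $a\oplus b=\min(a,b)$, $a\odot b=a+b$. $(A\odot B^T)_{ij}=\min_{l\in[n]}(A_{il}+B_{jl})$. The columns of $(A|B)$ are indexed by $[2n]=\{1,\dots,n,\bar1,\dots,\bar n\}$ (columns of $A$ by $1,\dots,n$, of $B$ by $\bar1,\dots,\bar n$), with $\bar{\bar i}=i$. Two vectors $x,y\in\mathbb{T}^{2n}$ are orthogonal if $\min_{l\in[2n]}(x_l+y_{\bar l})$ is attained at least twice. *)

From HB Require Import structures.
From mathcomp Require Import all_boot all_order all_algebra.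
Set Implicit Arguments. Unset Strict Implicit. Unset Printing Implicit Defensive.
Import Order.TTheory GRing.Theory Num.Theory.
Local Open Scope ring_scope.

(* Tropical semiring T = R ∪ {∞}: [Some a] is the real a, [None] is ∞. *)
Definition trop (R : realFieldType) := option R.

Definition tadd (R : realFieldType) (x y : trop R) : trop R :=
  match x, y with
  | None, _ => y
  | _, None => x
  | Some a, Some b => Some (Num.min a b)
  end.

Definition tmul (R : realFieldType) (x y : trop R) : trop R :=
  match x, y with
  | Some a, Some b => Some (a + b)
  | _, _ => None
  end.

Definition tmul_trT (R : realFieldType) (k n : nat)
  (A B : 'M[trop R]_(k, n)) : 'M[trop R]_(k, k) :=
  \matrix_(i < k, j < k) \big[@tadd R/None]_(l < n) tmul (A i l) (B j l).

(* index set [2n] = {1..n} ∪ {bar 1 .. bar n}: inl l = l, inr l = bar l *)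
Definition idx2 (n : nat) := ('I_n + 'I_n)%type.

Definition bar (n : nat) (l : idx2 n) : idx2 n :=
  match l with inl i => inr i | inr i => inl i end.

Definition rowAB (R : realFieldType) (k n : nat)
  (A B : 'M[trop R]_(k, n)) (i : 'I_k) : idx2 n -> trop R :=
  fun l => match l with inl m => A i m | inr m => B i m end.

Definition trop_orthogonal (R : realFieldType) (n : nat)
  (x y : idx2 n -> trop R) : Prop :=
  let f := fun l => tmul (x l) (y (bar l)) in
  let m := \big[@tadd R/None]_(l : idx2 n) f l in
  exists l1 l2 : idx2 n, l1 <> l2 /\ f l1 = m /\ f l2 = m.

From HB Require Import structures.
From mathcomp Require Import all_boot all_order all_algebra.
Local Open Scope ring_scope.
Import Order.TTheory GRing.Theory Num.Theory.

(* The orthogonality sum splits into the halves [min_l (A_il + B_jl)] and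
   [min_l (B_il + A_jl)], which are the entries (i, j) and (j, i) of
   [A ⊙ B^T].  By symmetry they are equal, so the overall minimum is attained
   once in each half, hence at two distinct indices. *)

Section TropicalAddition.

Context {R : realFieldType}.

Lemma taddA : associative (@tadd R).
Proof. by move=> [a|] [b|] [c|] //=; rewrite minA. Qed.

Lemma taddC : commutative (@tadd R).
Proof. by move=> [a|] [b|] //=; rewrite minC. Qed.

Lemma tadd0t : left_id None (@tadd R).
Proof. by []. Qed.

HB.instance Definition _ :=
  Monoid.isComLaw.Build (trop R) None (@tadd R) taddA taddC tadd0t.

Lemma taddtt : idempotent_op (@tadd R).
Proof. by move=> [a|] //=; rewrite minxx. Qed.

Lemma tadd_selective (x y : trop R) : tadd x y = x \/ tadd x y = y.
Proof. by case: x y => [a|] [b|] /=; auto; rewrite minEle; case: ifP; auto. Qed.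

Lemma tmulC : commutative (@tmul R).
Proof. by move=> [a|] [b|] //=; rewrite addrC. Qed.

Lemma big_tadd_attained {I : finType} (F : I -> trop R) (i0 : I) :
  exists i, \big[@tadd R/None]_(l : I) F l = F i.
Proof.
rewrite (bigD1 i0) //=.
have [->|[i ->]] : \big[@tadd R/None]_(l | l != i0) F l = None \/
                   exists i, \big[@tadd R/None]_(l | l != i0) F l = F i.
  apply: (big_ind (fun v => v = None \/ exists i, v = F i)) => [|v w Kv Kw|l _].
  - by left.
  - by have [] := tadd_selective v w => ->.
  - by right; exists l.
- by exists i0; rewrite Monoid.mulm1.
- by have [] := tadd_selective (F i0) (F i) => ->; eexists.
Qed.

End TropicalAddition.

(* The casts [None : trop R] make these sums syntactically match the halves
   produced by [big_sumType], so that [halves_eq] can be rewritten with. *)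
Lemma trop_orthogonal_halves {R : realFieldType} {n : nat} (hn : (0 < n)%N)
    (x y : idx2 n -> trop R) :
  \big[@tadd R/(None : trop R)]_(l < n) tmul (x (inl l)) (y (inr l)) =
  \big[@tadd R/(None : trop R)]_(l < n) tmul (x (inr l)) (y (inl l)) ->
  trop_orthogonal x y.
Proof.
move=> halves_eq.
rewrite /trop_orthogonal (big_sumType (@tadd R)) /= -halves_eq taddtt.
have [l1 e1] := big_tadd_attained (fun l => tmul (x (inl l)) (y (inr l))) (Ordinal hn).
have [l2 e2] := big_tadd_attained (fun l => tmul (x (inr l)) (y (inl l))) (Ordinal hn).
by exists (inl l1), (inr l2); rewrite /= -e1 halves_eq e2.
Qed.

Theorem proposition4p15 (R : realFieldType) (k n : nat) (hn : (0 < n)%N)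
  (A B : 'M[trop R]_(k, n)) :
  (tmul_trT A B)^T = tmul_trT A B ->
  forall i j : 'I_k, i <> j -> trop_orthogonal (rowAB A B i) (rowAB A B j).
Proof.
move=> sym i j _; apply: (trop_orthogonal_halves hn) => /=.
have := congr1 (fun M : 'M[trop R]_k => M i j) sym; rewrite !mxE => <-.
by apply: eq_bigr => l _; rewrite tmulC.
Qed.
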